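(* Assume that the covector $p_a$ satisfies $p_ap^a+\sigma u_au^a=0$ where $\sigma=\sigma_+$ or $\sigma=\sigma_-$. Then the eigenvalues (roots of the characteristic polynomial, counted with multiplicity) of the linear map $\mathcal{M}_b{}^d$ are $\lambda_1=\lambda_2=0$, $$\lambda_3=2\mathcal{L}_F\sigma\,u_au^a,\qquad \lambda_4=\big(4\mathcal{L}_F\sigma-4\mathcal{L}_{FF}+4\mathcal{L}_{FG}G\sigma-\mathcal{L}_{GG}(1+F\sigma)\big)u_au^a .$$
   Context: Let $F_{ab}$ be an antisymmetric tensor on an oriented 4-dimensional Lorentzian manifold with metric $g_{ab}$ (signature $(-,+,+,+)$; indices moved with $g$), $\varepsilon_{abcd}$ the volume form, ${}^{*}F_{ab}=\frac12\varepsilon_{abcd}F^{cd}$, $F=\frac12F_{ab}F^{ab}$, $G=-\frac14F_{ab}{}^{*}F^{ab}$. Let $\mathcal{L}(F,G)$ be smooth with partial derivatives $\mathcal{L}_F,\mathcal{L}_{FF},\mathcal{L}_{FG},\mathcal{L}_{GG}$ evaluated at the background invariants. $P=\mathcal{L}_{FF}\mathcal{L}_{GG}-\mathcal{L}_{FG}^2$, $M=\mathcal{L}_F^2+2\mathcal{L}_F\mathcal{L}_{FG}G-\frac12\mathcal{L}_F\mathcal{L}_{GG}F-PG^2$, $N=2\mathcal{L}_F\mathcal{L}_{FF}+\frac12\mathcal{L}_F\mathcal{L}_{GG}-PF$, $\sigma_\pm=\frac{N}{2M}\pm\sqrt{\frac{N^2}{4M^2}-\frac{P}{M}}$. Standing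 assumptions: $\mathcal{L}_F\neq0$, $M\neq0$, $1+\sigma_\pm F-\sigma_\pm^2G^2\neq0$. For a nonzero covector $p_a$ put $u_a=F_{ab}p^b$, $v_a={}^{*}F_{ab}p^b$ and $\mathcal{M}_b{}^d=-2\mathcal{L}_Fp_ap^a\delta_b^d+2\mathcal{L}_Fp_bp^d-4\mathcal{L}_{FF}u_bu^d+2\mathcal{L}_{FG}(u_bv^d+v_bu^d)-\mathcal{L}_{GG}v_bv^d$. *)

(* pointwise tensor algebra on a 4-dim real vector space
   (tangent space at a point), components in an arbitrary basis. *)
From HB Require Import structures.
From mathcomp Require Import all_boot all_order all_algebra.
Set Implicit Arguments. Unset Strict Implicit. Unset Printing Implicit Defensive.
Import Order.TTheory GRing.Theory Num.Theory.
Local Open Scope ring_scope.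

Section Tensors.
Variable R : rcfType.

Definition eta4 : 'M[R]_4 :=
  \matrix_(i < 4, j < 4) (if i == j then (if i == 0 :> nat then -1 else 1) else 0).

Definition lorentzian (g : 'M[R]_4) : Prop :=
  exists P : 'M[R]_4, P \in unitmx /\ g = P^T *m eta4 *m P.

Definition ginv (g : 'M[R]_4) : 'M[R]_4 := invmx g.

Definition levi (a b c d : 'I_4) : R :=
  \det (\matrix_(i < 4, j < 4) ((tnth [tuple a; b; c; d] i == j)%:R : R)).

(* Volume form epsilon_{abcd} = c0 [abcd], where c0^2 = -det g
   (i.e. c0 = +- sqrt|det g|, sign = orientation). *)
Definition volume_form (g : 'M[R]_4) (c0 : R) : Prop := c0 ^+ 2 = - \det g.
Definition eps (c0 : R) (a b c d : 'I_4) : R := c0 * levi a b c d.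

Definition raise2 (g T : 'M[R]_4) : 'M[R]_4 := ginv g *m T *m (ginv g)^T.

Definition hodge (g : 'M[R]_4) (c0 : R) (Fm : 'M[R]_4) : 'M[R]_4 :=
  \matrix_(a < 4, b < 4)
    (2^-1 * \sum_(c < 4) \sum_(d < 4) eps c0 a b c d * raise2 g Fm c d).

Definition contr2 (g T S : 'M[R]_4) : R :=
  \sum_(a < 4) \sum_(b < 4) T a b * raise2 g S a b.

Definition invarF (g Fm : 'M[R]_4) : R := 2^-1 * contr2 g Fm Fm.
Definition invarG (g : 'M[R]_4) (c0 : R) (Fm : 'M[R]_4) : R :=
  - (4^-1 * contr2 g Fm (hodge g c0 Fm)).

Definition raise1 (g : 'M[R]_4) (p : 'I_4 -> R) (a : 'I_4) : R :=
  \sum_(b < 4) ginv g a b * p b.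
Definition dot (g : 'M[R]_4) (x y : 'I_4 -> R) : R :=
  \sum_(a < 4) x a * raise1 g y a.
Definition contrv (g T : 'M[R]_4) (p : 'I_4 -> R) (a : 'I_4) : R :=
  \sum_(b < 4) T a b * raise1 g p b.

Definition Pc (LFF LFG LGG : R) : R := LFF * LGG - LFG ^+ 2.
Definition Mc (LF LFF LFG LGG F G : R) : R :=
  LF ^+ 2 + 2 * LF * LFG * G - 2^-1 * LF * LGG * F - Pc LFF LFG LGG * G ^+ 2.
Definition Nc (LF LFF LFG LGG F : R) : R :=
  2 * LF * LFF + 2^-1 * LF * LGG - Pc LFF LFG LGG * F.
Definition sigma_disc (LF LFF LFG LGG F G : R) : R :=
  let M := Mc LF LFF LFG LGG F G in let N := Nc LF LFF LFG LGG F in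
  N ^+ 2 / (4 * M ^+ 2) - Pc LFF LFG LGG / M.
Definition sigma_plus (LF LFF LFG LGG F G : R) : R :=
  Nc LF LFF LFG LGG F / (2 * Mc LF LFF LFG LGG F G)
  + Num.sqrt (sigma_disc LF LFF LFG LGG F G).
Definition sigma_minus (LF LFF LFG LGG F G : R) : R :=
  Nc LF LFF LFG LGG F / (2 * Mc LF LFF LFG LGG F G)
  - Num.sqrt (sigma_disc LF LFF LFG LGG F G).

Definition Mmat (g : 'M[R]_4) (c0 : R) (Fm : 'M[R]_4) (LF LFF LFG LGG : R)
  (p : 'I_4 -> R) : 'M[R]_4 :=
  let u := contrv g Fm p in
  let v := contrv g (hodge g c0 Fm) p in
  \matrix_(b < 4, d < 4)
    (- 2 * LF * dot g p p * (b == d)%:R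
     + 2 * LF * p b * raise1 g p d
     - 4 * LFF * u b * raise1 g u d
     + 2 * LFG * (u b * raise1 g v d + v b * raise1 g u d)
     - LGG * v b * raise1 g v d).

End Tensors.

(* Write g = P^T eta P with eta = diag(-1,1,1,1).  In the frame given by P, the identities
     p_a u^a = 0,  p_a v^a = 0,  u_a v^a = -G p_a p^a,  v_a v^a = u_a u^a - F p_a p^a
   (u = F p, v = *F p) are polynomial identities in the components of F_{ab} and p_a.
   The matrix M is mu + X C W with mu = -2 L_F p_a p^a, where X has columns p, u, v, W has rows
   p^a, u^a, v^a and C holds the coefficients L_F, L_FF, L_FG, L_GG.  By the Weinstein-Aronszajn
   identity, det(x - M) = (x - mu) det((x - mu) - C W X), and W X is the Gram matrix of p, u, v.
   After substituting p_a p^a = -sigma u_a u^a the cubic factors as claimed exactly because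
   sigma is a root of M s^2 - N s + P. *)
From mathcomp Require Import all_boot all_order all_algebra.
From mathcomp Require Import ring lra.
Import Order.TTheory GRing.Theory Num.Theory.
Local Open Scope ring_scope.
Set Implicit Arguments. Unset Strict Implicit. Unset Printing Implicit Defensive.

Section ExplicitDeterminants.
Variable R : comNzRingType.

Lemma det_mx22 (m : nat -> nat -> R) :
  \det (\matrix_(i < 2, j < 2) m i j) = m 0 0 * m 1 1 - m 0 1 * m 1 0.
Proof.
rewrite (expand_det_row _ ord0) !big_ord_recr big_ord0 /= /cofactor !det_mx11 !mxE /=.
ring.
Qed.

Lemma det_mx33 (m : nat -> nat -> R) :
  \det (\matrix_(i < 3, j < 3) m i j) =
  m 0 0 * (m 1 1 * m 2 2 - m 1 2 * m 2 1)
  - m 0 1 * (m 1 0 * m 2 2 - m 1 2 * m 2 0)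
  + m 0 2 * (m 1 0 * m 2 1 - m 1 1 * m 2 0).
Proof.
rewrite (expand_det_row _ ord0) !big_ord_recr big_ord0 /= /cofactor.
pose minor (j : nat) k l := m (bump 0 k) (bump j l).
have minorE (j : 'I_3) : row' ord0 (col' j (\matrix_(i < 3, j < 3) m i j)) =
   \matrix_(k < 2, l < 2) minor j k l by apply/matrixP => k l; rewrite !mxE.
rewrite !minorE !det_mx22 /minor !mxE /=.
ring.
Qed.

Lemma det_mx44 (m : nat -> nat -> R) :
  \det (\matrix_(i < 4, j < 4) m i j) =
  m 0 0 * (m 1 1 * (m 2 2 * m 3 3 - m 2 3 * m 3 2) - m 1 2 * (m 2 1 * m 3 3 - m 2 3 * m 3 1) + m 1 3 * (m 2 1 * m 3 2 - m 2 2 * m 3 1))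
- m 0 1 * (m 1 0 * (m 2 2 * m 3 3 - m 2 3 * m 3 2) - m 1 2 * (m 2 0 * m 3 3 - m 2 3 * m 3 0) + m 1 3 * (m 2 0 * m 3 2 - m 2 2 * m 3 0))
+ m 0 2 * (m 1 0 * (m 2 1 * m 3 3 - m 2 3 * m 3 1) - m 1 1 * (m 2 0 * m 3 3 - m 2 3 * m 3 0) + m 1 3 * (m 2 0 * m 3 1 - m 2 1 * m 3 0))
- m 0 3 * (m 1 0 * (m 2 1 * m 3 2 - m 2 2 * m 3 1) - m 1 1 * (m 2 0 * m 3 2 - m 2 2 * m 3 0) + m 1 2 * (m 2 0 * m 3 1 - m 2 1 * m 3 0)).
Proof.
rewrite (expand_det_row _ ord0) !big_ord_recr big_ord0 /= /cofactor.
pose minor (j : nat) k l := m (bump 0 k) (bump j l).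
have minorE (j : 'I_4) : row' ord0 (col' j (\matrix_(i < 4, j < 4) m i j)) =
   \matrix_(k < 3, l < 3) minor j k l by apply/matrixP => k l; rewrite !mxE.
rewrite !minorE !det_mx33 /minor !mxE /=.
ring.
Qed.

Lemma big_ord4 (F : 'I_4 -> R) :
  \sum_(i < 4) F i =
  F (@Ordinal 4 0 isT) + F (@Ordinal 4 1 isT) + F (@Ordinal 4 2 isT) + F (@Ordinal 4 3 isT).
Proof.
rewrite !big_ord_recr big_ord0 /= add0r.
by congr (_ + _ + _ + _); congr F; apply: val_inj.
Qed.

End ExplicitDeterminants.

Section LeviCivita.
Variable R : rcfType.

Definition levi_sign (a b c d : nat) : R :=
  if [&& a != b, a != c, a != d, b != c, b != d & c != d] then
    (if odd ((b < a) + (c < a) + (d < a) + (c < b) + (d < b) + (d < c))%N then -1 else 1)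
  else 0.

Lemma leviE (a b c d : 'I_4) : levi R a b c d = levi_sign a b c d.
Proof.
rewrite /levi.
pose m x y := ((nth 0%N [:: (a : nat); (b : nat); (c : nat); (d : nat)] x == y)%:R : R).
have -> : (\matrix_(i < 4, j < 4) ((tnth [tuple a; b; c; d] i == j)%:R : R)) =
          \matrix_(i < 4, j < 4) m i j.
  by apply/matrixP => i j; rewrite !mxE; case: i => [[|[|[|[|i]]]] Hi].
rewrite det_mx44 /m /= {m}.
by case: a => [[|[|[|[|a]]]] Ha] //; case: b => [[|[|[|[|b]]]] Hb] //;
   case: c => [[|[|[|[|c]]]] Hc] //; case: d => [[|[|[|[|d]]]] Hd] //=;
   rewrite /levi_sign /=; ring.
Qed.

Lemma det_levi_expansion (m : nat -> nat -> R) :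
  \sum_(a < 4) \sum_(b < 4) \sum_(c < 4) \sum_(d < 4)
     levi_sign a b c d * (m 0%N a * m 1%N b * m 2%N c * m 3%N d)
  = \det (\matrix_(i < 4, j < 4) m i j).
Proof. by rewrite det_mx44 !big_ord4 /levi_sign /=; ring. Qed.

(* Both sides are the determinant of the matrix whose rows are the rows i, j, e, f of S. *)
Lemma sum_levi_mul_det (S : 'M[R]_4) (i j e f : 'I_4) :
  \sum_(a < 4) \sum_(b < 4) \sum_(c < 4) \sum_(d < 4)
     levi R a b c d * (S i a * S j b * S e c * S f d) = levi R i j e f * \det S.
Proof.
pose m x y := S (nth i [:: i; j; e; f] x) (inord y).
have detm : \det (\matrix_(x < 4, y < 4) m x y) = levi R i j e f * \det S.
  rewrite /levi -det_mulmx; congr (\det _); apply/matrixP => x y; rewrite !mxE.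
  rewrite (bigD1 (tnth [tuple i; j; e; f] x)) //= mxE eqxx mul1r big1 ?addr0; last first.
    by move=> k /negPf; rewrite mxE eq_sym => ->; rewrite mul0r.
  by rewrite /m inord_val; case: x => [[|[|[|[|x]]]] Hx].
rewrite -detm -det_levi_expansion.
apply: eq_bigr => a _; apply: eq_bigr => b _; apply: eq_bigr => c _; apply: eq_bigr => d _.
by rewrite leviE /m /= !inord_val.
Qed.

Definition levi_dual (Y : 'M[R]_4) : 'M[R]_4 :=
  \matrix_(a < 4, b < 4) (2^-1 * \sum_(c < 4) \sum_(d < 4) levi R a b c d * Y c d).

Lemma mulmx_trmx_entry (S A : 'M[R]_4) i j :
  (S *m A *m S^T) i j = \sum_(a < 4) \sum_(b < 4) S i a * S j b * A a b.
Proof.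
rewrite mxE [RHS]exchange_big; apply: eq_bigr => b _.
rewrite !mxE big_distrl; apply: eq_bigr => a _.
by rewrite mulrAC.
Qed.

Lemma levi_dual_congr (S Y : 'M[R]_4) :
  S *m levi_dual (S^T *m Y *m S) *m S^T = \det S *: levi_dual Y.
Proof.
apply/matrixP => i j.
have YSE c d : (S^T *m Y *m S) c d = \sum_(e < 4) \sum_(f < 4) S e c * S f d * Y e f.
  have := mulmx_trmx_entry S^T Y c d; rewrite trmxK => ->.
  by apply: eq_bigr => e _; apply: eq_bigr => f _; rewrite !mxE.
rewrite mulmx_trmx_entry !mxE.
pose T a b c d e f := levi R a b c d * (S i a * S j b * S e c * S f d) * Y e f.
transitivity (2^-1 * \sum_(a < 4) \sum_(b < 4) \sum_(c < 4) \sum_(d < 4)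
                       \sum_(e < 4) \sum_(f < 4) T a b c d e f).
  rewrite big_distrr; apply: eq_bigr => a _; rewrite big_distrr; apply: eq_bigr => b _ /=.
  rewrite mxE mulrCA; congr (_ * _).
  rewrite big_distrr; apply: eq_bigr => c _; rewrite big_distrr; apply: eq_bigr => d _ /=.
  rewrite YSE !big_distrr; apply: eq_bigr => e _; rewrite !big_distrr; apply: eq_bigr => f _ /=.
  by rewrite /T; ring.
rewrite mulrCA; congr (_ * _).
rewrite big_distrr; under [RHS]eq_bigr => e _ do rewrite big_distrr /=.
under [RHS]eq_bigr => e _ do under eq_bigr => f _ do
  rewrite mulrA [_ * levi _ _ _ _ _]mulrC -sum_levi_mul_det.
rewrite pair_bigA; under eq_bigr => ab _ do rewrite pair_bigA.
under eq_bigr => ab _ do under eq_bigr => cd _ do rewrite pair_bigA.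
rewrite [RHS]pair_bigA.
under [RHS]eq_bigr => p _ do rewrite pair_bigA big_distrl /=.
under [RHS]eq_bigr => p _ do under eq_bigr => ab _ do rewrite pair_bigA big_distrl /=.
rewrite [RHS]exchange_big; apply: eq_bigr => ab _ /=.
rewrite [RHS]exchange_big; apply: eq_bigr => cd _ /=.
by apply: eq_bigr => p _; rewrite /T.
Qed.

End LeviCivita.

Section Minkowski.
Variable R : rcfType.

(* Matrices presented by a function of natural-number indices: products, traces and
   duals of such matrices unfold to explicit polynomials in the entries, on which
   [ring] decides the identities of this section. *)
Definition nat_mx m n (a : nat -> nat -> R) : 'M[R]_(m, n) := \matrix_(i < m, j < n) a i j.

Lemma nat_mxE m n (a : nat -> nat -> R) i j : nat_mx m n a i j = a i j.
Proof. by rewrite mxE. Qed.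

Lemma eq_nat_mx m n (a b : nat -> nat -> R) :
  (forall i j, (i < m)%N -> (j < n)%N -> a i j = b i j) -> nat_mx m n a = nat_mx m n b.
Proof. by move=> eq_ab; apply/matrixP => i j; rewrite !mxE eq_ab. Qed.

Lemma mul_nat_mx m n (a b : nat -> nat -> R) :
  nat_mx m 4 a *m nat_mx 4 n b =
  nat_mx m n (fun i j =>
    a i 0%N * b 0%N j + a i 1%N * b 1%N j + a i 2%N * b 2%N j + a i 3%N * b 3%N j).
Proof. by apply/matrixP => i j; rewrite !mxE big_ord4 /= !mxE. Qed.

Lemma tr_nat_mx m n (a : nat -> nat -> R) : (nat_mx m n a)^T = nat_mx n m (fun i j => a j i).
Proof. by apply/matrixP => i j; rewrite !mxE. Qed.

Lemma mxtrace_nat_mx (a : nat -> nat -> R) :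
  \tr (nat_mx 4 4 a) = a 0%N 0%N + a 1%N 1%N + a 2%N 2%N + a 3%N 3%N.
Proof. by rewrite /mxtrace big_ord4 /= !mxE. Qed.

Definition levi_dual_fun (a : nat -> nat -> R) (x y : nat) : R :=
  2^-1 * \sum_(c < 4) \sum_(d < 4) levi_sign R x y c d * a c d.

Lemma levi_dual_nat_mx (a : nat -> nat -> R) :
  levi_dual (nat_mx 4 4 a) = nat_mx 4 4 (levi_dual_fun a).
Proof.
apply/matrixP => i j; rewrite !mxE /levi_dual_fun; congr (_ * _).
by apply: eq_bigr => c _; apply: eq_bigr => d _; rewrite leviE mxE.
Qed.

Definition eta_fun (i j : nat) : R := if i == j then (if i == 0%N then -1 else 1) else 0.

Lemma eta4E : eta4 R = nat_mx 4 4 eta_fun.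
Proof. by apply/matrixP => i j; rewrite !mxE. Qed.

Lemma eta4_mulmx_eta4 : eta4 R *m eta4 R = 1%:M.
Proof.
rewrite eta4E mul_nat_mx; apply/matrixP => i j; rewrite !mxE.
by case: i => [[|[|[|[|i]]]] Hi] //; case: j => [[|[|[|[|j]]]] Hj] //;
  rewrite /eta_fun /=; ring.
Qed.

Lemma tr_eta4 : (eta4 R)^T = eta4 R.
Proof.
apply/matrixP => i j; rewrite !mxE.
by case: i => [[|[|[|[|i]]]] Hi] //; case: j => [[|[|[|[|j]]]] Hj].
Qed.

Lemma det_eta4 : \det (eta4 R) = -1.
Proof. by rewrite eta4E /nat_mx det_mx44 /eta_fun /=; ring. Qed.

Definition skew_fun (x01 x02 x03 x12 x13 x23 : R) (i j : nat) : R :=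
  match i, j with
  | 0%N, 1%N => x01 | 0%N, 2%N => x02 | 0%N, 3%N => x03
  | 1%N, 2%N => x12 | 1%N, 3%N => x13 | 2%N, 3%N => x23
  | 1%N, 0%N => - x01 | 2%N, 0%N => - x02 | 3%N, 0%N => - x03
  | 2%N, 1%N => - x12 | 3%N, 1%N => - x13 | 3%N, 2%N => - x23
  | _, _ => 0 end.

Lemma skew_nat_mx (A : 'M[R]_4) : A^T = - A ->
  A = nat_mx 4 4 (skew_fun (A (inord 0) (inord 1)) (A (inord 0) (inord 2)) (A (inord 0) (inord 3))
                           (A (inord 1) (inord 2)) (A (inord 1) (inord 3)) (A (inord 2) (inord 3))).
Proof.
move=> AT.
have Aji i j : A j i = - A i j by have := congr1 (fun M : 'M[R]_4 => M i j) AT; rewrite !mxE.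
have Aii i : A i i = 0 by have := Aji i i; lra.
have ordE (i : 'I_4) : i = inord i by rewrite inord_val.
apply/matrixP => i j; rewrite mxE.
case: i => [[|[|[|[|i]]]] Hi] //; case: j => [[|[|[|[|j]]]] Hj] //;
  rewrite /= (ordE (Ordinal Hi)) (ordE (Ordinal Hj)) /= ?Aii //; apply: Aji.
Qed.

Lemma col_nat_mx (q : 'cV[R]_4) :
  q = nat_mx 4 1 (fun i _ => nth 0 [:: q (inord 0) 0; q (inord 1) 0; q (inord 2) 0; q (inord 3) 0] i).
Proof.
apply/matrixP => i j; rewrite mxE [j]ord1.
by case: i => [[|[|[|[|i]]]] Hi] //; rewrite /= -[Ordinal Hi]inord_val.
Qed.

Definition mdot (x y : 'cV[R]_4) : R := (x^T *m eta4 R *m y) 0 0.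

Lemma mdotZl (a : R) (x y : 'cV[R]_4) : mdot (a *: x) y = a * mdot x y.
Proof. by rewrite /mdot linearZ /= -!scalemxAl mxE. Qed.

Lemma mdotZr (a : R) (x y : 'cV[R]_4) : mdot x (a *: y) = a * mdot x y.
Proof. by rewrite /mdot -scalemxAr mxE. Qed.

Lemma levi_dual_skew (x01 x02 x03 x12 x13 x23 : R) :
  levi_dual (eta4 R *m nat_mx 4 4 (skew_fun x01 x02 x03 x12 x13 x23) *m eta4 R) =
  nat_mx 4 4 (skew_fun x23 (- x13) x12 (- x03) x02 (- x01)).
Proof.
rewrite eta4E !mul_nat_mx levi_dual_nat_mx; apply: eq_nat_mx => i j Hi Hj.
rewrite /levi_dual_fun !big_ord4 /=.
case: i Hi => [|[|[|[|i]]]] Hi //; case: j Hj => [|[|[|[|j]]]] Hj //;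
  by rewrite /levi_sign /skew_fun /eta_fun /=; field.
Qed.

Lemma minkowski_gram (A : 'M[R]_4) (q : 'cV[R]_4) : A^T = - A ->
  let D := levi_dual (eta4 R *m A *m eta4 R) in
  let u := A *m eta4 R *m q in let v := D *m eta4 R *m q in
  [/\ mdot q u = 0, mdot q v = 0,
      4 * mdot u v = \tr (A^T *m eta4 R *m D *m eta4 R) * mdot q q &
      2 * mdot v v = 2 * mdot u u - \tr (A^T *m eta4 R *m A *m eta4 R) * mdot q q].
Proof.
move=> /skew_nat_mx -> D u v; rewrite {}/v {}/u {}/D levi_dual_skew [q]col_nat_mx.
move: (A _ _) (A _ _) (A _ _) (A _ _) (A _ _) (A _ _) => x01 x02 x03 x12 x13 x23.
move: (q _ _) (q _ _) (q _ _) (q _ _) => q0 q1 q2 q3.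
by split; rewrite /mdot eta4E !(mul_nat_mx, tr_nat_mx) ?mxtrace_nat_mx !nat_mxE
  /skew_fun /eta_fun /=; ring.
Qed.

End Minkowski.

Section Components.
Variable R : rcfType.
Implicit Types (g T S : 'M[R]_4) (x y : 'I_4 -> R).

Definition colv x : 'cV[R]_4 := \col_i x i.

Lemma colv_raise1 g x : colv (raise1 g x) = ginv g *m colv x.
Proof. by apply/matrixP => i j; rewrite !mxE; apply: eq_bigr => b _; rewrite !mxE. Qed.

Lemma dotE g x y : dot g x y = ((colv x)^T *m ginv g *m colv y) 0 0.
Proof. by rewrite -mulmxA -colv_raise1 mxE; apply: eq_bigr => a _; rewrite !mxE. Qed.

Lemma dotC g x y : g^T = g -> dot g x y = dot g y x.
Proof.
move=> gT; have tr00 (M : 'M[R]_1) : M 0 0 = M^T 0 0 by rewrite mxE.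
by rewrite !dotE tr00 !trmx_mul trmxK /ginv trmx_inv gT mulmxA.
Qed.

Lemma colv_contrv g T x : colv (contrv g T x) = T *m ginv g *m colv x.
Proof.
rewrite -mulmxA -colv_raise1; apply/matrixP => i j; rewrite !mxE.
by apply: eq_bigr => b _; rewrite !mxE.
Qed.

Lemma contr2E g T S : contr2 g T S = \tr (T^T *m raise2 g S).
Proof.
rewrite /contr2 /mxtrace exchange_big; apply: eq_bigr => b _; rewrite mxE.
by apply: eq_bigr => a _; rewrite !mxE.
Qed.

Lemma hodgeE g c0 T : hodge g c0 T = c0 *: levi_dual (raise2 g T).
Proof.
apply/matrixP => a b; rewrite !mxE mulrCA; congr (_ * _).
rewrite big_distrr; apply: eq_bigr => c _; rewrite big_distrr; apply: eq_bigr => d _ /=.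
by rewrite /eps mulrA.
Qed.

End Components.

Lemma invmx_right (R : comUnitRingType) n (A B : 'M[R]_n) : A *m B = 1%:M -> invmx A = B.
Proof.
move=> AB; have [Au _] := mulmx1_unit AB.
by rewrite -[invmx A]mulmx1 -AB mulmxA mulVmx // mul1mx.
Qed.

Section OrthonormalFrame.
Variables (R : rcfType) (P : 'M[R]_4).
Hypothesis P_unit : P \in unitmx.
Local Notation g := (P^T *m eta4 R *m P).
Local Notation Q := (invmx P).
Local Notation frame T := (Q^T *m T *m Q).

Lemma ginv_frame : ginv g = Q *m eta4 R *m Q^T.
Proof.
apply: invmx_right; rewrite !mulmxA mulmxK // -(mulmxA P^T) eta4_mulmx_eta4.
by rewrite mulmx1 -trmx_mul mulVmx // trmx1.
Qed.

Lemma dot_frame x y : dot g x y = mdot (Q^T *m colv x) (Q^T *m colv y).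
Proof. by rewrite dotE ginv_frame /mdot trmx_mul trmxK !mulmxA. Qed.

Lemma contrv_frame T x :
  Q^T *m colv (contrv g T x) = frame T *m eta4 R *m (Q^T *m colv x).
Proof. by rewrite colv_contrv ginv_frame !mulmxA. Qed.

Lemma raise2_frame T : raise2 g T = Q *m (eta4 R *m frame T *m eta4 R) *m Q^T.
Proof. by rewrite /raise2 ginv_frame !trmx_mul trmxK tr_eta4 !mulmxA. Qed.

Lemma contr2_frame T S :
  contr2 g T S = \tr ((frame T)^T *m eta4 R *m frame S *m eta4 R).
Proof.
by rewrite contr2E raise2_frame !mulmxA mxtrace_mulC !trmx_mul trmxK !mulmxA.
Qed.

Lemma hodge_frame c0 T :
  frame (hodge g c0 T) = (c0 * \det Q) *: levi_dual (eta4 R *m frame T *m eta4 R).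
Proof.
rewrite hodgeE raise2_frame -scalemxAr -scalemxAl -scalerA; congr (_ *: _).
by have := levi_dual_congr Q^T (eta4 R *m frame T *m eta4 R); rewrite !trmxK det_tr.
Qed.

Lemma volume_frame c0 : volume_form g c0 -> (c0 * \det Q) ^+ 2 = 1.
Proof.
rewrite /volume_form !det_mulmx det_tr det_eta4 det_inv => c0E.
have detP0 : \det P != 0 by rewrite -unitfE -unitmxE.
by rewrite exprMn c0E; field.
Qed.

Lemma gram_frame c0 (Fm : 'M[R]_4) (p : 'I_4 -> R) :
  volume_form g c0 -> Fm^T = - Fm ->
  let u := contrv g Fm p in let v := contrv g (hodge g c0 Fm) p in
  [/\ dot g p u = 0, dot g p v = 0, dot g u v = - invarG g c0 Fm * dot g p p &
      dot g v v = dot g u u - invarF g Fm * dot g p p].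
Proof.
move=> /volume_frame s2 FmT u v.
set s := c0 * \det Q in s2; set A := frame Fm; set q := Q^T *m colv p.
set D := levi_dual (eta4 R *m A *m eta4 R).
have AT : A^T = - A by rewrite !trmx_mul trmxK FmT mulNmx mulmxN mulmxA.
have uE : Q^T *m colv u = A *m eta4 R *m q by exact: contrv_frame.
have vE : Q^T *m colv v = s *: (D *m eta4 R *m q).
  by rewrite contrv_frame hodge_frame -!scalemxAl.
have EF : invarF g Fm = 2^-1 * \tr (A^T *m eta4 R *m A *m eta4 R).
  by rewrite /invarF contr2_frame.
have EG : invarG g c0 Fm = - (4^-1 * (s * \tr (A^T *m eta4 R *m D *m eta4 R))).
  by rewrite /invarG contr2_frame hodge_frame -scalemxAr -scalemxAl mxtraceZ.
have [pu pv uv vv] := minkowski_gram q AT.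
rewrite !dot_frame uE vE !mdotZr ?mdotZl EF EG; split.
- exact: pu.
- by rewrite pv mulr0.
- apply: (@mulfI _ 4); first by rewrite pnatr_eq0.
  by rewrite mulrCA uv; field.
- rewrite mulrA -expr2 s2 mul1r; apply: (@mulfI _ 2); first by rewrite pnatr_eq0.
  by rewrite vv; field.
Qed.

End OrthonormalFrame.

Lemma lorentzian_sym (R : rcfType) (g : 'M[R]_4) : lorentzian g -> g^T = g.
Proof. by move=> [P [_ ->]]; rewrite !trmx_mul trmxK tr_eta4 mulmxA. Qed.

Lemma gram_identities (R : rcfType) (g : 'M[R]_4) c0 (Fm : 'M[R]_4) (p : 'I_4 -> R) :
  lorentzian g -> volume_form g c0 -> Fm^T = - Fm ->
  let u := contrv g Fm p in let v := contrv g (hodge g c0 Fm) p in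
  [/\ dot g p u = 0, dot g p v = 0, dot g u v = - invarG g c0 Fm * dot g p p &
      dot g v v = dot g u u - invarF g Fm * dot g p p].
Proof. by move=> [P [P_unit ->]]; exact: gram_frame. Qed.

(* Weinstein-Aronszajn identity, proved by factoring two block matrices. *)
Lemma det_scalar_sub_mulmxC (R : comNzRingType) m n (t : R)
    (X : 'M[R]_(m, n)) (Z : 'M[R]_(n, m)) :
  t ^+ n * \det (t%:M - X *m Z) = t ^+ m * \det (t%:M - Z *m X).
Proof.
pose B1 := block_mx (1%:M : 'M[R]_m) 0 (- Z) (t%:M : 'M[R]_n).
pose B2 := block_mx (t%:M : 'M[R]_m) X Z (1%:M : 'M[R]_n).
have B1B2 : B1 *m B2 = block_mx t%:M X 0 (t%:M - Z *m X).
  rewrite mulmx_block !mul1mx !mul0mx !addr0 mulmx1 mulNmx mul_mx_scalar mul_scalar_mx.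
  by rewrite addNr addrC mulNmx.
have B2E : B2 = block_mx 1%:M X 0 1%:M *m block_mx (t%:M - X *m Z) 0 Z 1%:M.
  by rewrite mulmx_block !mul1mx !mul0mx !mulmx1 !add0r subrK.
have := congr1 determinant B1B2.
rewrite det_mulmx B2E det_mulmx det_lblock det_ublock det_lblock det_ublock !det1 !det_scalar.
by rewrite !mul1r !mulr1 => ->.
Qed.

Lemma char_poly_scalar_add_mulmx (R : idomainType) n (a : R)
    (X : 'M[R]_(n.+1, n)) (Z : 'M[R]_(n, n.+1)) :
  char_poly (a%:M + X *m Z) =
  ('X - a%:P) * \det (('X - a%:P)%:M - map_mx polyC (Z *m X)).
Proof.
rewrite /char_poly /char_poly_mx map_mxD map_mxM map_scalar_mx.
have -> : 'X%:M - ((a%:P)%:M + map_mx polyC X *m map_mx polyC Z) =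
          ('X - a%:P)%:M - map_mx polyC X *m map_mx polyC Z.
  by apply/matrixP => i j; rewrite !mxE mulrnBl; ring.
apply: (@mulfI _ (('X - a%:P) ^+ n)); first by rewrite expf_neq0 // polyXsubC_eq0.
by rewrite det_scalar_sub_mulmxC -map_mxM exprS -mulrA mulrCA.
Qed.

Lemma quadratic_root (R : rcfType) (a b c s : R) : a != 0 ->
  0 <= b ^+ 2 / (4 * a ^+ 2) - c / a ->
  s = b / (2 * a) + Num.sqrt (b ^+ 2 / (4 * a ^+ 2) - c / a) \/
  s = b / (2 * a) - Num.sqrt (b ^+ 2 / (4 * a ^+ 2) - c / a) ->
  a * s ^+ 2 - b * s + c = 0.
Proof.
move=> a0 disc_ge0 sE.
have sqE : (s - b / (2 * a)) ^+ 2 = b ^+ 2 / (4 * a ^+ 2) - c / a.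
  by case: sE => ->; rewrite addrAC subrr add0r ?sqrrN sqr_sqrtr.
have -> : a * s ^+ 2 - b * s + c =
          a * ((s - b / (2 * a)) ^+ 2 - (b ^+ 2 / (4 * a ^+ 2) - c / a)) by field.
by rewrite sqE subrr mulr0.
Qed.

Section FieldEquationMatrix.
Variable R : rcfType.

Definition covector_mx (x y z : 'I_4 -> R) : 'M[R]_(4, 3) :=
  \matrix_(a < 4, k < 3) nth 0 [:: x a; y a; z a] k.

Definition raised_mx (g : 'M[R]_4) (x y z : 'I_4 -> R) : 'M[R]_(3, 4) :=
  \matrix_(k < 3, d < 4) nth 0 [:: raise1 g x d; raise1 g y d; raise1 g z d] k.

Definition coeff_mx (LF LFF LFG LGG : R) : 'M[R]_3 :=
  \matrix_(k < 3, l < 3)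
    nth 0 (nth [::] [:: [:: 2 * LF; 0; 0]; [:: 0; - 4 * LFF; 2 * LFG]; [:: 0; 2 * LFG; - LGG]] k) l.

Lemma raised_mx_mul_covector_mx g (x y z : 'I_4 -> R) :
  raised_mx g x y z *m covector_mx x y z =
  \matrix_(k < 3, l < 3) dot g (nth x [:: x; y; z] l) (nth x [:: x; y; z] k).
Proof.
apply/matrixP => k l; rewrite !mxE; apply: eq_bigr => d _; rewrite !mxE mulrC.
by case: k => [[|[|[|k]]] Hk] //; case: l => [[|[|[|l]]] Hl].
Qed.

Lemma Mmat_decomposition g c0 (Fm : 'M[R]_4) LF LFF LFG LGG p :
  let u := contrv g Fm p in let v := contrv g (hodge g c0 Fm) p in
  Mmat g c0 Fm LF LFF LFG LGG p =
  (- 2 * LF * dot g p p)%:M + covector_mx p u v *m (coeff_mx LF LFF LFG LGG *m raised_mx g p u v).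
Proof.
move=> u v; apply/matrixP => b d.
rewrite /u /v !mxE !big_ord_recr !big_ord0 /= !mxE.
by rewrite !big_ord_recr !big_ord0 /= !mxE /= mulr_natr; ring.
Qed.

Lemma char_poly_Mmat g c0 (Fm : 'M[R]_4) LF LFF LFG LGG p :
  let u := contrv g Fm p in let v := contrv g (hodge g c0 Fm) p in
  let t := 'X - (- 2 * LF * dot g p p)%:P in
  char_poly (Mmat g c0 Fm LF LFF LFG LGG p) = t * \det (t%:M - map_mx polyC
    (coeff_mx LF LFF LFG LGG *m
     \matrix_(k < 3, l < 3) dot g (nth p [:: p; u; v] l) (nth p [:: p; u; v] k))).
Proof.
by rewrite Mmat_decomposition char_poly_scalar_add_mulmx -mulmxA raised_mx_mul_covector_mx.
Qed.

Definition gram_mx (pp uu uv vv : R) : 'M[R]_3 :=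
  \matrix_(k < 3, l < 3) nth 0 (nth [::] [:: [:: pp; 0; 0]; [:: 0; uu; uv]; [:: 0; uv; vv]] k) l.

Lemma char_poly_gram_root (LF LFF LFG LGG F G s U : R) :
  Mc LF LFF LFG LGG F G * s ^+ 2 - Nc LF LFF LFG LGG F * s + Pc LFF LFG LGG = 0 ->
  let pp := - (s * U) in let t := 'X - (- 2 * LF * pp)%:P in
  t * \det (t%:M - map_mx polyC
    (coeff_mx LF LFF LFG LGG *m gram_mx pp U (- G * pp) (U - F * pp))) =
  'X ^+ 2 * ('X - (2 * LF * s * U)%:P) *
  ('X - ((4 * LF * s - 4 * LFF + 4 * LFG * G * s - LGG * (1 + F * s)) * U)%:P).
Proof.
move=> root_s pp t.
pose k i j := nth 0 (nth [::] [:: [:: 2 * LF * pp; 0; 0];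
  [:: 0; - 4 * LFF * U + 2 * LFG * (- G * pp); - 4 * LFF * (- G * pp) + 2 * LFG * (U - F * pp)];
  [:: 0; 2 * LFG * U - LGG * (- G * pp); 2 * LFG * (- G * pp) - LGG * (U - F * pp)]] i) j.
pose m i j : {poly R} := t *+ (i == j) - (k i j)%:P.
have -> : t%:M - map_mx polyC (coeff_mx LF LFF LFG LGG *m gram_mx pp U (- G * pp) (U - F * pp)) =
          \matrix_(i < 3, j < 3) m i j.
  apply/matrixP => i j; rewrite !mxE !big_ord_recr big_ord0 /= !mxE.
  by case: i => [[|[|[|i]]] Hi] //; case: j => [[|[|[|j]]] Hj] //;
    rewrite /m /k /=; congr (_ - _%:P); ring.
set P := LFF * LGG - LFG ^+ 2.
have root4 : (4 * LF ^+ 2 + 8 * LF * LFG * G - 2 * LF * LGG * F - 4 * P * G ^+ 2) * s ^+ 2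
             - (8 * LF * LFF + 2 * LF * LGG - 4 * P * F) * s + 4 * P = 0.
  by rewrite -[RHS](mulr0 4) -root_s /Mc /Nc /Pc -/P; field.
rewrite det_mx33 /m /k /=.
(* The two sides differ by t 'X U^2 times the quadratic satisfied by s. *)
rewrite -[RHS]addr0 -[in RHS](mulr0 (t * 'X)) -[in RHS]polyC0.
rewrite -[in RHS](mulr0 (U ^+ 2)) -[in RHS]root4 /t /pp /P.
ring.
Qed.

End FieldEquationMatrix.

Theorem proposition2 (R : rcfType) (g : 'M[R]_4) (c0 : R) (Fm : 'M[R]_4)
  (LF LFF LFG LGG : R) (p : 'I_4 -> R) (sigma : R) :
  lorentzian g -> volume_form g c0 ->
  Fm^T = - Fm ->
  let F := invarF g Fm in
  let G := invarG g c0 Fm in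
  LF != 0 ->
  Mc LF LFF LFG LGG F G != 0 ->
  0 <= sigma_disc LF LFF LFG LGG F G ->
  1 + sigma_plus LF LFF LFG LGG F G * F
    - (sigma_plus LF LFF LFG LGG F G) ^+ 2 * G ^+ 2 != 0 ->
  1 + sigma_minus LF LFF LFG LGG F G * F
    - (sigma_minus LF LFF LFG LGG F G) ^+ 2 * G ^+ 2 != 0 ->
  (exists a, p a != 0) ->
  (sigma = sigma_plus LF LFF LFG LGG F G \/
   sigma = sigma_minus LF LFF LFG LGG F G) ->
  let u := contrv g Fm p in
  dot g p p + sigma * dot g u u = 0 ->
  let lam3 := 2 * LF * sigma * dot g u u in
  let lam4 := (4 * LF * sigma - 4 * LFF + 4 * LFG * G * sigma
               - LGG * (1 + F * sigma)) * dot g u u in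
  char_poly (Mmat g c0 Fm LF LFF LFG LGG p)
    = 'X ^+ 2 * ('X - lam3%:P) * ('X - lam4%:P).
Proof.
move=> gL vol FmT F G _ M0 disc_ge0 _ _ _ sigmaE u null_p lam3 lam4.
have root := quadratic_root M0 disc_ge0 sigmaE.
have [pu pv uv vv] := gram_identities p gL vol FmT.
set v := contrv g (hodge g c0 Fm) p in pv uv vv.
have dot_sym := dotC _ _ (lorentzian_sym gL).
have gramE : \matrix_(k < 3, l < 3) dot g (nth p [:: p; u; v] l) (nth p [:: p; u; v] k) =
             gram_mx (dot g p p) (dot g u u) (- G * dot g p p) (dot g u u - F * dot g p p).
  apply/matrixP => k l; rewrite !mxE.
  by case: k => [[|[|[|k]]] Hk] //; case: l => [[|[|[|l]]] Hl] //=;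
    rewrite ?(dot_sym u) ?(dot_sym v) ?pu ?pv ?uv ?vv.
have ppE : dot g p p = - (sigma * dot g u u) by apply/eqP; rewrite -addr_eq0 null_p.
by rewrite char_poly_Mmat gramE ppE char_poly_gram_root.
Qed.
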